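(* Let $\Sigma=(X,U,F)$ be a system, $Q\subset X$ a controlled invariant set, and $V\subset U$ a finite cover of $Q$ such that: (C.1) $Q_a\cap Q_b=\emptyset$ for all distinct $a,b\in V$; (C.2) for all $a,b\in V$ with $M_{ab}=1$ there exists $K\subset Q_a$ such that $Q_b\subset F(K,a)$; (C.3) $Q_c=\emptyset$ for every $c\in U\setminus V$. Let $\mathcal{A}_V=\{Q_a:a\in V\}$ and $G_V:\mathcal{A}_V\to U$, $G_V(Q_a)=a$. Then \[h^{fb}_{inv}(Q)=\inf\{h_{inv}(\mathcal{B},G_{\mathcal{B}}):(\mathcal{B},G_{\mathcal{B}})\text{ is a refinement of }(\mathcal{A}_V,G_V)\}.\]
   Context: A system is a triple $\Sigma=(X,U,F)$ where $X,U$ are nonempty sets and $F:X\times U\rightrightarrows X$ is a set-valued map with $F(x,u)\neq\emptyset$ for all $(x,u)$; for $A\subset X$, $F(A,u)=\bigcup_{x\in A}F(x,u)$. $Q\subset X$ is controlled invariant if for every $x\in Q$ there is $u\in U$ with $F(x,u)\subset Q$. For $u\in U$ put $Q_u=\{x\in Q:F(x,u)\subset Q\}$. A set $V\subset U$ is a cover of $Q$ if $Q\subset\bigcup_{a\in V}Q_a$; the admissible matrix $M_{Q,V}=(M_{ab})_{a,b\in V}$ has $M_{ab}=1$ if there exists $x\in Q_a$ with $F(x,a)\cap Q_b\neq\emptyset$, and $0$ otherwise. An invariant cover of $Q$ is a pair $(\mathcal{A},G)$ where $\mathcal{A}$ is a finite cover of $Q$ (by subsets of $Q$) and $G:\mathcal{A}\to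 U$ satisfies $F(A,G(A))\subset Q$ for all $A\in\mathcal{A}$. For $\mathcal{S}\subset\mathcal{A}^n$, $\alpha=\alpha(0)\cdots\alpha(n-1)\in\mathcal{S}$ and integer $0\le t<n-1$, let $P(\alpha|_{[0,t]})=\{A\in\mathcal{A}:\exists\hat\alpha\in\mathcal{S},\ \hat\alpha|_{[0,t]}=\alpha|_{[0,t]},\ A=\hat\alpha(t+1)\}$, and $P(\alpha|_{[0,n-1]})=P(\alpha)=\{\hat\alpha(0):\hat\alpha\in\mathcal{S}\}$. $\mathcal{S}$ is $(n,Q)$-spanning in $(\mathcal{A},G)$ if (1) the elements of $P(\alpha)$ cover $Q$, and (2) for every $\alpha\in\mathcal{S}$ and $0\le t<n-1$, $F(\alpha(t),G(\alpha(t)))\subset\bigcup_{A'\in P(\alpha|_{[0,t]})}A'$. Let $N(\mathcal{S})=\max_{\alpha\in\mathcal{S}}\prod_{t=0}^{n-1}\sharp P(\alpha|_{[0,t]})$, $r_{inv}(n,Q,\mathcal{A},G)=\min\{N(\mathcal{S}):\mathcal{S}\ (n,Q)\text{-spanning in }(\mathcal{A},G)\}$, $h_{inv}(\mathcal{A},G)=\lim_{n\to\infty}\frac1n\log r_{inv}(n,Q,\mathcal{A},G)$ ($\log$ base $2$), and the invariance feedback entropy $h^{fb}_{inv}(Q)=\inf_{(\mathcal{A},G)}h_{inv}(\mathcal{A},G)$ over all invariant covers of $Q$. A refinement of $(\mathcal{A}_V,G_V)$ is a pair $(\mathcal{B},G_{\mathcal{B}})$ where $\mathcal{B}$ is a finite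 cover of $Q$, every $B\in\mathcal{B}$ is contained in some $A\in\mathcal{A}_V$, and $G_{\mathcal{B}}(B)=G_V(A)$ for such $A$. *)

From HB Require Import structures.
From mathcomp Require Import all_boot all_order all_algebra.
From mathcomp Require Import all_classical all_reals all_analysis.
Set Implicit Arguments. Unset Strict Implicit. Unset Printing Implicit Defensive.
Import Order.TTheory GRing.Theory Num.Theory numFieldNormedType.Exports.
Local Open Scope classical_set_scope.
Local Open Scope ring_scope.

Definition img {X U : Type} (F : X -> U -> set X) (A : set X) (u : U) : set X :=
  [set y | exists2 x, A x & F x u y].

Definition is_system {X U : Type} (F : X -> U -> set X) : Prop :=
  forall x u, F x u !=set0.

Definition controlled_invariant {X U : Type} (F : X -> U -> set X) (Q : set X) : Prop :=
  forall x, Q x -> exists u, F x u `<=` Q.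

Definition Qu {X U : Type} (F : X -> U -> set X) (Q : set X) (u : U) : set X :=
  [set x | Q x /\ F x u `<=` Q].

Definition is_cover {X U : Type} (F : X -> U -> set X) (Q : set X) (V : set U) : Prop :=
  Q `<=` \bigcup_(a in V) Qu F Q a.

(* entry M_ab = 1 of the admissible matrix *)
Definition adm {X U : Type} (F : X -> U -> set X) (Q : set X) (a b : U) : Prop :=
  exists2 x, Qu F Q a x & (F x a `&` Qu F Q b) !=set0.

(* An invariant cover (A,G) with finite cover A = {A i | i : 'I_k} (A injective,
   so that the k indices correspond to k distinct subsets of Q). *)
Definition inv_cover {X U : Type} (F : X -> U -> set X) (Q : set X) (k : nat)
  (A : 'I_k -> set X) (G : 'I_k -> U) : Prop :=
  [/\ injective A, (forall i, A i `<=` Q), Q `<=` \bigcup_(i in [set: 'I_k]) A i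
    & forall i, img F (A i) (G i) `<=` Q].

(* at_ s t x : the t-th entry of the word s is x *)
Definition at_ {k : nat} (s : seq 'I_k) (t : nat) (x : 'I_k) : bool :=
  take t.+1 s == rcons (take t s) x.

(* P(alpha|[0,t]) ; for t = n-1 (or larger) it is P(alpha) = {beta(0) : beta in S} *)
Definition Pset {k n : nat} (S : {set n.-tuple 'I_k}) (al : n.-tuple 'I_k) (t : nat)
  : {set 'I_k} :=
  if (t.+1 < n)%N then
    finset (fun x => [exists be in S, (take t.+1 (tval be) == take t.+1 (tval al))
                              && at_ (tval be) t.+1 x])
  else finset (fun x => [exists be in S, at_ (tval be) 0 x]).

Definition P0 {k n : nat} (S : {set n.-tuple 'I_k}) : {set 'I_k} :=
  finset (fun x => [exists be in S, at_ (tval be) 0 x]).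

Definition spanning {X U : Type} (F : X -> U -> set X) (Q : set X) (k n : nat)
  (A : 'I_k -> set X) (G : 'I_k -> U) (S : {set n.-tuple 'I_k}) : Prop :=
  Q `<=` \bigcup_(i in [set i | i \in P0 S]) A i /\
  forall al : n.-tuple 'I_k, al \in S -> forall (t : nat) (x : 'I_k),
    (t.+1 < n)%N -> at_ (tval al) t x ->
    img F (A x) (G x) `<=` \bigcup_(j in [set j | j \in Pset S al t]) A j.

Definition NS {k n : nat} (S : {set n.-tuple 'I_k}) : nat :=
  \max_(al in S) \prod_(t < n) #|Pset S al t|.

Definition r_inv (R : realType) {X U : Type} (F : X -> U -> set X) (Q : set X)
  (k : nat) (A : 'I_k -> set X) (G : 'I_k -> U) (n : nat) : R :=
  inf [set (NS S)%:R | S in [set S : {set n.-tuple 'I_k} | spanning F Q A G S]].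

Definition log2 (R : realType) (x : R) : R := ln x / ln 2.

Definition h_inv (R : realType) {X U : Type} (F : X -> U -> set X) (Q : set X)
  (k : nat) (A : 'I_k -> set X) (G : 'I_k -> U) : R :=
  limn (fun n : nat => log2 (r_inv R F Q A G n) / n%:R).

Definition hfb_inv (R : realType) {X U : Type} (F : X -> U -> set X) (Q : set X) : R :=
  inf [set h | exists (k : nat) (A : 'I_k -> set X) (G : 'I_k -> U),
         inv_cover F Q A G /\ h = h_inv R F Q A G].

Definition refinement {X U : Type} (F : X -> U -> set X) (Q : set X) (V : set U)
  (k : nat) (B : 'I_k -> set X) (GB : 'I_k -> U) : Prop :=
  [/\ injective B, Q `<=` \bigcup_(i in [set: 'I_k]) B i
    & forall i, exists a, [/\ V a, B i `<=` Qu F Q a & GB i = a]].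

From HB Require Import structures.
From mathcomp Require Import all_boot all_order all_algebra.
From mathcomp Require Import all_classical all_reals all_analysis.
Local Open Scope classical_set_scope.
Local Open Scope ring_scope.
Import Order.TTheory GRing.Theory Num.Theory.

Set Implicit Arguments.
Unset Strict Implicit.

(* Refinements of (A_V, G_V) are invariant covers, and under (C.3) every
   invariant cover is a refinement up to the controls on empty cells: a cell
   A with G(A) = u lies in Q_u, and Q_u is empty unless u is in V. Changing the
   control of an empty cell does not change F(A, G(A)) = set0, hence not the
   spanning sets nor the entropy, so both infima range over the same values.
   If V is empty then so is Q, and every entropy is 0 (the empty family is
   spanning, r_inv = 0, and ln 0 = 0 in the library). *)

Section InvariantCovers.
Variables (R : realType) (X U : Type) (F : X -> U -> set X) (Q : set X).

Lemma img_set0 u : img F set0 u = set0.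
Proof. by apply/seteqP; split => y // [x]. Qed.

Lemma sub_Qu (A : set X) u : A `<=` Q -> img F A u `<=` Q -> A `<=` Qu F Q u.
Proof.
by move=> AQ imgQ x Ax; split; [exact: AQ | move=> y Fy; apply: imgQ; exists x].
Qed.

Lemma refinement_inv_cover V k (B : 'I_k -> set X) (GB : 'I_k -> U) :
  refinement F Q V B GB -> inv_cover F Q B GB.
Proof.
move=> [injB covB refB]; split => // i.
  by move=> x Bx; have [a [_ /(_ x Bx) []]] := refB i.
move=> y [x Bx Fxy]; have [a [_ /(_ x Bx) [_ FxQ] GBi]] := refB i.
by apply: FxQ; rewrite -GBi.
Qed.

Lemma spanning_img_eq k n (A : 'I_k -> set X) (G G' : 'I_k -> U)
    (S : {set n.-tuple 'I_k}) :
  (forall i, img F (A i) (G i) = img F (A i) (G' i)) ->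
  spanning F Q A G S -> spanning F Q A G' S.
Proof.
by move=> eqG [covS spanS]; split => // al Sal t x tn atx; rewrite -eqG; exact: spanS.
Qed.

Lemma h_inv_img_eq k (A : 'I_k -> set X) (G G' : 'I_k -> U) :
  (forall i, img F (A i) (G i) = img F (A i) (G' i)) ->
  h_inv R F Q A G = h_inv R F Q A G'.
Proof.
move=> eqG; have eq_span n : @spanning _ _ F Q k n A G = spanning F Q A G'.
  apply/funext => S; apply/propext; split; exact: spanning_img_eq.
by rewrite /h_inv /r_inv; under eq_fun do rewrite eq_span.
Qed.

Lemma inv_cover_refinement V a0 k (A : 'I_k -> set X) (G : 'I_k -> U) :
  V a0 -> (forall c, ~ V c -> Qu F Q c = set0) -> inv_cover F Q A G ->
  exists GB, refinement F Q V A GB /\ h_inv R F Q A GB = h_inv R F Q A G.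
Proof.
move=> Va0 QuV [injA AQ covA imgAQ].
exists (fun i => if pselect (A i = set0) then a0 else G i); split; last first.
  by apply: h_inv_img_eq => i; case: pselect => //= Ai0; rewrite Ai0 !img_set0.
split => // i; case: pselect => /= [Ai0 | Ai0]; first by exists a0; rewrite Ai0.
have AQu : A i `<=` Qu F Q (G i) by exact: sub_Qu.
exists (G i); split => //; apply: contrapT => VGi; apply: Ai0.
by apply/seteqP; split => // x /AQu; rewrite QuV.
Qed.

Lemma cover_set0 V : is_cover F Q V -> ~ (exists a, V a) -> Q = set0.
Proof.
by move=> covV noV; apply/seteqP; split => // x /covV [a Va _]; case: noV; exists a.
Qed.

Lemma r_inv_set0 k (A : 'I_k -> set X) (G : 'I_k -> U) n :
  r_inv R F set0 A G n = 0.
Proof.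
rewrite /r_inv; set N := [set _ | _ in _].
have N_ge0 : lbound N 0 by move=> _ [S _ <-]; exact: ler0n.
have N0 : N 0.
  exists finset.set0; last by rewrite /NS big_set0.
  by split=> // al; rewrite inE.
apply/eqP; rewrite eq_le (ge_inf _ N0) ?(lb_le_inf _ N_ge0) //; by exists 0.
Qed.

Lemma h_inv_set0 k (A : 'I_k -> set X) (G : 'I_k -> U) :
  h_inv R F set0 A G = 0.
Proof.
rewrite /h_inv; under eq_fun do rewrite r_inv_set0 /log2 ln0 // !mul0r.
exact: norm_lim_cst.
Qed.

End InvariantCovers.

Theorem corollary3p12 (R : realType) (X U : Type) (F : X -> U -> set X)
  (Q : set X) (V : set U) :
  (exists x : X, True) -> (exists u : U, True) ->
  is_system F ->
  controlled_invariant F Q ->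
  finite_set V ->
  is_cover F Q V ->
  (* (C.1) *)
  (forall a b, V a -> V b -> a <> b -> Qu F Q a `&` Qu F Q b = set0) ->
  (* (C.2) *)
  (forall a b, V a -> V b -> adm F Q a b ->
     exists2 K, K `<=` Qu F Q a & Qu F Q b `<=` img F K a) ->
  (* (C.3) *)
  (forall c, ~ V c -> Qu F Q c = set0) ->
  hfb_inv R F Q =
  inf [set h | exists (k : nat) (B : 'I_k -> set X) (GB : 'I_k -> U),
         refinement F Q V B GB /\ h = h_inv R F Q B GB].
Proof.
move=> _ [u0 _] _ _ _ covV _ _ QuV.
rewrite /hfb_inv; congr inf.
apply/seteqP; split => h [k [A [G [covA ->]]]]; last first.
  by exists k, A, G; split => //; exact: refinement_inv_cover covA.
have [[a0 Va0] | noV] := pselect (exists a, V a).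
  have [GB [refGB <-]] := inv_cover_refinement R Va0 QuV covA.
  by exists k, A, GB.
rewrite (cover_set0 covV noV).
exists 0%N, (fun _ => set0), (fun _ => u0); rewrite !h_inv_set0.
split; last by []; split; [by case | exact: sub0set | by case].
Qed.
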